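(* Let $s>3/2$. There is a constant $C>0$ such that for all $\sigma\in(1/2,1]$, all $\omega\in\{-1,1\}$, all integers $n\ge1$ and all $t\in\mathbb R$, the error $E=E^{\omega,n}(t)$ satisfies \[\|E(t)\|_{H^\sigma}\le\begin{cases}C\,n^{-2s+1+\sigma},& 3/2<s<2,\\ C\,n^{-s-1+\sigma},& s\ge2.\end{cases}\]
   Context: $\mathbb S=\mathbb R/(2\pi\mathbb Z)$. For $r\in\mathbb R$, $H^r(\mathbb S)$ is the Sobolev space with norm $\|u\|_{H^r}^2=\sum_{k\in\mathbb Z}(1+k^2)^r|\langle u,\phi_k\rangle|^2$, where $\phi_k(x)=e^{ikx}/\sqrt{2\pi}$, and $\Lambda^r=(1-\partial_x^2)^{r/2}$ is the Fourier multiplier with symbol $(1+k^2)^{r/2}$. For a function $u$ set $R(u):=7u_x^2-3u^4+2u^3-10u^2-2u$. For $s>3/2$, $\omega\in\{-1,1\}$ and integer $n\ge1$ define the approximate solution \[u^{\omega,n}(t,x):=\frac{\omega n^{-1}-1-n^{-s}\cos(nx+\omega t)}{14},\] and its error $E:=u^{\omega,n}_t-u^{\omega,n}_x-14u^{\omega,n}u^{\omega,n}_x-\partial_x\Lambda^{-2}R(u^{\omega,n})$. *)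

From Stdlib Require Import Reals ClassicalEpsilon.
Open Scope R_scope.

Definition deriv (f : R -> R) (x : R) : R :=
  epsilon (inhabits 0) (fun l => derivable_pt_lim f x l).

Definition integral (f : R -> R) (a b : R) : R :=
  epsilon (inhabits 0)
    (fun I => exists pr : Riemann_integrable f a b, RiemannInt pr = I).

(* Real Fourier coefficients on S = R/2piZ:
   a_k = int_0^{2pi} f cos(kx), b_k = int_0^{2pi} f sin(kx).
   For real f: |<f,phi_k>|^2 = |<f,phi_{-k}>|^2 = (a_k^2 + b_k^2)/(2 pi). *)
Definition fcos (f : R -> R) (k : nat) : R :=
  integral (fun x => f x * cos (INR k * x)) 0 (2 * PI).
Definition fsin (f : R -> R) (k : nat) : R :=
  integral (fun x => f x * sin (INR k * x)) 0 (2 * PI).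

(* Lambda^{-2} f = sum_k (1+k^2)^{-1} <f,phi_k> phi_k, written in real form:
   a_0/(2pi) + sum_{k>=1} (1/pi) (1+k^2)^{-1} (a_k cos kx + b_k sin kx). *)
Definition Lambda_m2_term (f : R -> R) (x : R) (k : nat) : R :=
  match k with
  | O => fcos f 0 / (2 * PI)
  | S _ => / (PI * (1 + INR k ^ 2)) *
           (fcos f k * cos (INR k * x) + fsin f k * sin (INR k * x))
  end.
Definition Lambda_m2 (f : R -> R) (x : R) : R :=
  epsilon (inhabits 0) (fun v => infinite_sum (Lambda_m2_term f x) v).

(* Terms of ||f||_{H^r}^2 = sum_{k in Z} (1+k^2)^r |<f,phi_k>|^2 for real f,
   grouping k and -k for k >= 1. *)
Definition Hs_term (r : R) (f : R -> R) (k : nat) : R :=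
  match k with
  | O => fcos f 0 ^ 2 / (2 * PI)
  | S _ => 2 * Rpower (1 + INR k ^ 2) r * (fcos f k ^ 2 + fsin f k ^ 2) / (2 * PI)
  end.

Definition u_app (s omega : R) (n : nat) (t x : R) : R :=
  (omega / INR n - 1 - Rpower (INR n) (- s) * cos (INR n * x + omega * t)) / 14.

(* R(u) = 7 u_x^2 - 3u^4 + 2u^3 - 10u^2 - 2u, with v = u, vx = u_x. *)
Definition Rnl (v vx : R) : R :=
  7 * vx ^ 2 - 3 * v ^ 4 + 2 * v ^ 3 - 10 * v ^ 2 - 2 * v.

Definition Err (s omega : R) (n : nat) (t x : R) : R :=
  let u := u_app s omega n in
  deriv (fun tau => u tau x) t
  - deriv (fun y => u t y) x
  - 14 * u t x * deriv (fun y => u t y) x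
  - deriv (Lambda_m2 (fun y => Rnl (u t y) (deriv (fun z => u t z) y))) x.

From Stdlib Require Import Reals Lra Lia ClassicalEpsilon Classical FunctionalExtensionality.
From Coquelicot Require Import Coquelicot.
Open Scope R_scope.

(* The approximate solution is a single harmonic u = A - B cos theta, with
   theta = n x + omega t, A = (omega/n - 1)/14 and B = n^{-s}/14, so the error
   can be computed exactly.  R(u) is a cosine polynomial of degree 4 in theta;
   Lambda^{-2} divides the coefficient of cos (j theta) by 1 + (j n)^2; and the
   transport part u_t - u_x - 14 u u_x reduces to 7 n B^2 sin (2 theta), because
   14 A n = omega - n.  Hence E is a sine polynomial in theta whose coefficients
   e_j are O(B/n + n B^2), and by Parseval
     ||E||_{H^sigma}^2 = sum_j pi (1 + (j n)^2)^sigma e_j^2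
                      <= 340 (n^{-s-1+sigma} + n^{-2s+1+sigma})^2.
   The larger of the two rates is n^{-2s+1+sigma} for s < 2 and
   n^{-s-1+sigma} for s >= 2. *)

Lemma integral_of_is_RInt f a b I : is_RInt f a b I -> integral f a b = I.
Proof.
  intros H.
  pose proof (ex_RInt_Reals_0 f a b (ex_intro _ I H)) as pr.
  unfold integral.
  destruct (epsilon_spec (inhabits 0) (fun I => exists pr, RiemannInt pr = I)
     (ex_intro _ (RiemannInt pr) (ex_intro _ pr eq_refl))) as [pr' Hpr'].
  rewrite <- Hpr', <- RInt_Reals. apply is_RInt_unique; auto.
Qed.

Lemma deriv_of_lim f x l : derivable_pt_lim f x l -> deriv f x = l.
Proof.
  intros H. unfold deriv.
  pose proof (epsilon_spec (inhabits 0) (fun l => derivable_pt_lim f x l)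
                (ex_intro _ l H)) as H2.
  eapply uniqueness_limite; eauto.
Qed.

Lemma is_RInt_eq_val (f : R -> R) a b (I J : R) : I = J -> is_RInt f a b I -> is_RInt f a b J.
Proof. intros ->; auto. Qed.

Lemma is_RInt_sum_f_R0 (f : nat -> R -> R) (I : nat -> R) a b N :
  (forall j, is_RInt (f j) a b (I j)) ->
  is_RInt (fun x => sum_f_R0 (fun j => f j x) N) a b (sum_f_R0 I N).
Proof.
  intros H. induction N as [|N IH]; simpl; [apply H|].
  apply (is_RInt_plus _ _ _ _ _ _ IH (H (S N))).
Qed.

Lemma is_RInt_cos_period (d : nat) c : (1 <= d)%nat ->
  is_RInt (fun x => cos (INR d * x + c)) 0 (2*PI) 0.
Proof.
  intros Hd.
  assert (Hd' : INR d <> 0) by (apply not_0_INR; lia).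
  eapply is_RInt_eq_val;
    [|apply (is_RInt_derive (fun x => sin (INR d * x + c) / INR d))].
  - unfold minus, plus, opp; simpl.
    replace (INR d * (2*PI) + c) with (c + 2 * INR d * PI) by ring.
    rewrite sin_period. replace (INR d * 0 + c) with c by ring. field; auto.
  - intros x _. auto_derive; auto. field; auto.
  - intros x _. apply continuity_pt_filterlim, derivable_continuous_pt. reg.
Qed.

Lemma is_RInt_const_period (v : R) : is_RInt (fun _ => v) 0 (2*PI) (2*PI*v).
Proof.
  eapply is_RInt_eq_val; [|apply (@is_RInt_const R_NormedModule 0 (2*PI) v)].
  unfold scal; simpl; unfold mult; simpl; ring.
Qed.

(* Orthogonality of shifted cosines on [0, 2 pi]: product-to-sum reduces
   to the two lemmas above. *)
Lemma is_RInt_cos_cos m ph k ps :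
  is_RInt (fun x => cos (INR m * x + ph) * cos (INR k * x + ps)) 0 (2*PI)
    (if Nat.eqb m k
     then (if Nat.eqb m 0 then 2 * PI * cos ph * cos ps else PI * cos (ph - ps))
     else 0).
Proof.
  assert (Hprod : forall y z, cos y * cos z = 1/2 * cos (y + z) + 1/2 * cos (y - z)).
  { intros y z. rewrite cos_plus, cos_minus. field. }
  destruct (Nat.eqb_spec m k) as [<-|Hmk].
  - destruct (Nat.eqb_spec m 0) as [->|Hm0].
    + eapply is_RInt_eq_val;
        [|eapply is_RInt_ext; [|apply (is_RInt_const_period (cos ph * cos ps))]].
      * ring.
      * intros x _. simpl. f_equal; f_equal; ring.
    + eapply is_RInt_eq_val; [|eapply is_RInt_ext; cycle 1].
      2:{ apply (is_RInt_plus _ _ _ _ _ _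
          (is_RInt_scal _ _ _ (1/2) _ (is_RInt_cos_period (m+m) (ph+ps) ltac:(lia)))
          (is_RInt_const_period (1/2 * cos (ph - ps)))). }
      * unfold plus, scal; simpl; unfold mult; simpl; field.
      * intros x _. unfold plus, scal; simpl; unfold mult; simpl.
        rewrite Hprod, plus_INR. f_equal; f_equal; f_equal; ring.
  - assert (Hd : exists d c, (1 <= d)%nat /\
                  forall x, cos (INR m * x + ph - (INR k * x + ps)) = cos (INR d * x + c)).
    { destruct (Nat.lt_ge_cases m k) as [Hlt|Hge].
      - exists (k - m)%nat, (ps - ph). split; [lia|]. intros x.
        rewrite <- cos_neg. f_equal. rewrite minus_INR by lia. ring.
      - exists (m - k)%nat, (ph - ps). split; [lia|]. intros x.
        f_equal. rewrite minus_INR by lia. ring. }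
    destruct Hd as [d [c [Hd Hc]]].
    eapply is_RInt_eq_val; [|eapply is_RInt_ext; cycle 1].
    2:{ apply (is_RInt_plus _ _ _ _ _ _
        (is_RInt_scal _ _ _ (1/2) _ (is_RInt_cos_period (m+k) (ph+ps) ltac:(lia)))
        (is_RInt_scal _ _ _ (1/2) _ (is_RInt_cos_period d c Hd))). }
    + unfold plus, scal; simpl; unfold mult; simpl; field.
    + intros x _. unfold plus, scal; simpl; unfold mult; simpl.
      rewrite Hprod, <- Hc, plus_INR. f_equal; f_equal; f_equal; ring.
Qed.

(* Sines are phase-shifted cosines, so orthogonality of cosines covers all cases. *)
Lemma sin_as_cos y : sin y = cos (y + -(PI/2)).
Proof. rewrite <- cos_neg, <- cos_shift. f_equal. ring. Qed.

Lemma cos_add_PI2 y : cos (y - -(PI/2)) = - sin y.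
Proof.
  replace (y - -(PI/2)) with (y + PI/2) by ring. rewrite cos_plus, cos_PI2, sin_PI2. ring.
Qed.

(* Squared L^2 norm of x |-> cos (m x) over a period. *)
Definition cos_norm2 (m : nat) : R := if Nat.eqb m 0 then 2 * PI else PI.

Lemma is_RInt_harmonic_cos m ph a b k :
  is_RInt (fun x => (a * cos (INR m * x + ph) + b * sin (INR m * x + ph)) * cos (INR k * x))
    0 (2*PI) (if Nat.eqb m k then cos_norm2 m * (a * cos ph + b * sin ph) else 0).
Proof.
  eapply is_RInt_eq_val; [|eapply is_RInt_ext; cycle 1].
  2:{ apply (is_RInt_plus _ _ _ _ _ _ (is_RInt_scal _ _ _ a _ (is_RInt_cos_cos m ph k 0))
              (is_RInt_scal _ _ _ b _ (is_RInt_cos_cos m (ph + -(PI/2)) k 0))). }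
  - unfold plus, scal, cos_norm2; simpl; unfold mult; simpl.
    rewrite !Rminus_0_r, <- !sin_as_cos, cos_0.
    destruct (Nat.eqb m k), (Nat.eqb m 0); ring.
  - intros x _. unfold plus, scal; simpl; unfold mult; simpl.
    rewrite sin_as_cos, !Rplus_0_r. ring_simplify. f_equal. f_equal. f_equal. ring.
Qed.

Lemma is_RInt_harmonic_sin m ph a b k :
  is_RInt (fun x => (a * cos (INR m * x + ph) + b * sin (INR m * x + ph)) * sin (INR k * x))
    0 (2*PI)
    (if Nat.eqb m k then (if Nat.eqb m 0 then 0 else PI * (b * cos ph - a * sin ph)) else 0).
Proof.
  eapply is_RInt_eq_val; [|eapply is_RInt_ext; cycle 1].
  2:{ apply (is_RInt_plus _ _ _ _ _ _
              (is_RInt_scal _ _ _ a _ (is_RInt_cos_cos m ph k (-(PI/2))))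
              (is_RInt_scal _ _ _ b _ (is_RInt_cos_cos m (ph + -(PI/2)) k (-(PI/2))))). }
  - unfold plus, scal; simpl; unfold mult; simpl.
    replace (ph + - (PI / 2) - - (PI / 2)) with ph by ring.
    rewrite cos_add_PI2, <- !sin_as_cos, cos_neg, cos_PI2.
    destruct (Nat.eqb m k), (Nat.eqb m 0); ring.
  - intros x _. unfold plus, scal; simpl; unfold mult; simpl.
    rewrite !(sin_as_cos (INR k * x)), (sin_as_cos (INR m * x + ph)).
    replace (INR m * x + (ph + - (PI / 2))) with (INR m * x + ph + - (PI / 2)) by ring.
    ring.
Qed.

(* A function on the frequencies k : nat carrying the weight g j at frequency
   j n (j <= N); for n >= 1 the frequencies j n are distinct. *)
Definition spectrum (n N : nat) (g : nat -> R) (k : nat) : R :=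
  sum_f_R0 (fun j => if Nat.eqb (j * n) k then g j else 0) N.

Lemma sum_f_R0_indicator m w K :
  sum_f_R0 (fun k => if Nat.eqb m k then w else 0) K = if Nat.leb m K then w else 0.
Proof.
  induction K as [|K IH]; simpl sum_f_R0.
  - destruct m; reflexivity.
  - rewrite IH.
    destruct (Nat.leb_spec m K), (Nat.eqb_spec m (S K)), (Nat.leb_spec m (S K));
      try lia; ring.
Qed.

Lemma spectrum_series n N g : infinite_sum (spectrum n N g) (sum_f_R0 g N).
Proof.
  assert (Hone : forall j, is_series (fun k => if Nat.eqb (j * n) k then g j else 0) (g j)).
  { intros j. apply is_series_Reals. intros eps He. exists (j * n)%nat. intros K HK.
    rewrite sum_f_R0_indicator. destruct (Nat.leb_spec (j * n) K); [|lia].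
    unfold R_dist. rewrite Rminus_diag, Rabs_R0. lra. }
  apply is_series_Reals. unfold spectrum. induction N as [|N IH]; simpl; [apply Hone|].
  exact (is_series_plus _ _ _ _ IH (Hone (S N))).
Qed.

Lemma spectrum_ext n N g h k :
  (forall j, (j * n)%nat = k -> g j = h j) -> spectrum n N g k = spectrum n N h k.
Proof.
  intros H. apply sum_eq. intros j _.
  destruct (Nat.eqb_spec (j * n) k); [apply H|]; auto.
Qed.

Lemma sum_f_R0_zero (f : nat -> R) N :
  (forall j, (j <= N)%nat -> f j = 0) -> sum_f_R0 f N = 0.
Proof.
  intros H. induction N as [|N IH]; simpl.
  - apply H; lia.
  - rewrite IH, H; [ring | lia | intros j Hj; apply H; lia].
Qed.

Lemma sum_f_R0_single (f : nat -> R) N j0 :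
  (j0 <= N)%nat -> (forall j, (j <= N)%nat -> j <> j0 -> f j = 0) ->
  sum_f_R0 f N = f j0.
Proof.
  intros Hj0 H. induction N as [|N IH].
  - replace j0 with 0%nat by lia. reflexivity.
  - simpl. destruct (Nat.eq_dec j0 (S N)) as [->|Hne].
    + rewrite sum_f_R0_zero; [ring|]. intros j Hj. apply H; lia.
    + rewrite IH, (H (S N)); [ring | lia | lia | lia | intros j Hj Hj'; apply H; lia].
Qed.

(* Since the frequencies j n are distinct for n >= 1, at most one weight lives
   at each frequency, so any F with F 0 0 = 0 acts weight-wise on spectra. *)
Lemma spectrum_combine (F : R -> R -> R) n N g h k : (1 <= n)%nat -> F 0 0 = 0 ->
  F (spectrum n N g k) (spectrum n N h k) = spectrum n N (fun j => F (g j) (h j)) k.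
Proof.
  intros Hn HF. unfold spectrum.
  destruct (classic (exists j0, (j0 <= N)%nat /\ (j0 * n)%nat = k)) as [[j0 [Hj0 Hk]]|Hno].
  - assert (Hother : forall (f : nat -> R) j, (j <= N)%nat -> j <> j0 ->
              (if Nat.eqb (j * n) k then f j else 0) = 0).
    { intros f j _ Hj. destruct (Nat.eqb_spec (j * n) k); [nia|reflexivity]. }
    rewrite (sum_f_R0_single _ N j0 Hj0 (Hother g)), (sum_f_R0_single _ N j0 Hj0 (Hother h)),
      (sum_f_R0_single _ N j0 Hj0 (Hother (fun j => F (g j) (h j)))).
    subst k. rewrite Nat.eqb_refl. reflexivity.
  - assert (Hnone : forall (f : nat -> R) j, (j <= N)%nat ->
              (if Nat.eqb (j * n) k then f j else 0) = 0).
    { intros f j Hj. destruct (Nat.eqb_spec (j * n) k); [exfalso; eauto|reflexivity]. }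
    rewrite (sum_f_R0_zero _ N (Hnone g)), (sum_f_R0_zero _ N (Hnone h)),
      (sum_f_R0_zero _ N (Hnone (fun j => F (g j) (h j)))).
    exact HF.
Qed.

Lemma spectrum_map (F : R -> R) n N g k : (1 <= n)%nat -> F 0 = 0 ->
  F (spectrum n N g k) = spectrum n N (fun j => F (g j)) k.
Proof. intros Hn HF. exact (spectrum_combine (fun u _ => F u) n N g g k Hn HF). Qed.

Definition trig_poly (n N : nat) (c : R) (a b : nat -> R) (x : R) : R :=
  sum_f_R0 (fun j => a j * cos (INR (j*n) * x + INR j * c)
                   + b j * sin (INR (j*n) * x + INR j * c)) N.

Lemma fcos_trig_poly n N c a b k :
  fcos (trig_poly n N c a b) k
  = spectrum n N
      (fun j => cos_norm2 (j*n) * (a j * cos (INR j * c) + b j * sin (INR j * c))) k.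
Proof.
  unfold fcos, spectrum. apply integral_of_is_RInt.
  eapply is_RInt_ext;
    [|apply is_RInt_sum_f_R0; intros j; apply is_RInt_harmonic_cos].
  intros x _. unfold trig_poly. rewrite (Rmult_comm _ (cos _)), scal_sum. reflexivity.
Qed.

Lemma fsin_trig_poly n N c a b k :
  fsin (trig_poly n N c a b) k
  = spectrum n N (fun j => if Nat.eqb (j*n) 0 then 0
                           else PI * (b j * cos (INR j * c) - a j * sin (INR j * c))) k.
Proof.
  unfold fsin, spectrum. apply integral_of_is_RInt.
  eapply is_RInt_ext;
    [|apply is_RInt_sum_f_R0; intros j; apply is_RInt_harmonic_sin].
  intros x _. unfold trig_poly. rewrite (Rmult_comm _ (sin _)), scal_sum. reflexivity.
Qed.

Lemma Lambda_m2_term_trig_poly n N c a b x k : (1 <= n)%nat ->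
  Lambda_m2_term (trig_poly n N c a b) x k
  = spectrum n N (fun j => (a j * cos (INR (j*n) * x + INR j * c)
                            + b j * sin (INR (j*n) * x + INR j * c))
                           / (1 + INR (j*n) ^ 2)) k.
Proof.
  intros Hn. pose proof PI_neq0 as HPI.
  destruct k as [|k]; unfold Lambda_m2_term; cbv iota.
  - rewrite fcos_trig_poly, (spectrum_map (fun u => u / (2 * PI))) by (auto; lra).
    apply spectrum_ext. intros j Hj. rewrite Hj. unfold cos_norm2. simpl.
    rewrite !Rmult_0_l, !Rplus_0_l. field. auto.
  - rewrite fcos_trig_poly, fsin_trig_poly,
      (spectrum_combine (fun u v => / (PI * (1 + INR (S k) ^ 2)) *
                                     (u * cos (INR (S k) * x) + v * sin (INR (S k) * x))))
      by (auto; ring).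
    apply spectrum_ext. intros j Hj. rewrite Hj. unfold cos_norm2. simpl Nat.eqb. cbv iota.
    rewrite cos_plus, sin_plus. field. split; auto.
    pose proof (pos_INR (S k)). nra.
Qed.

Lemma Lambda_m2_trig_poly n N c a b : (1 <= n)%nat ->
  Lambda_m2 (trig_poly n N c a b)
  = trig_poly n N c (fun j => a j / (1 + INR (j*n) ^ 2)) (fun j => b j / (1 + INR (j*n) ^ 2)).
Proof.
  intros Hn. apply functional_extensionality. intros x.
  assert (H : infinite_sum (Lambda_m2_term (trig_poly n N c a b) x)
                (sum_f_R0 (fun j => (a j * cos (INR (j*n) * x + INR j * c)
                            + b j * sin (INR (j*n) * x + INR j * c))
                           / (1 + INR (j*n) ^ 2)) N)).
  { apply is_series_Reals.
    eapply is_series_ext; [intros k; symmetry; apply Lambda_m2_term_trig_poly; auto|].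
    apply is_series_Reals, spectrum_series. }
  unfold Lambda_m2.
  rewrite (uniqueness_sum _ _ _ (epsilon_spec (inhabits 0)
    (fun v => infinite_sum (Lambda_m2_term (trig_poly n N c a b) x) v) (ex_intro _ _ H)) H).
  apply sum_eq. intros j _. field. pose proof (pos_INR (j*n)). nra.
Qed.

Lemma derivable_pt_lim_trig_poly n N c a b x :
  derivable_pt_lim (trig_poly n N c a b) x
    (trig_poly n N c (fun j => INR (j*n) * b j) (fun j => - INR (j*n) * a j) x).
Proof.
  apply is_derive_Reals. revert x. induction N as [|N IH]; intros x.
  - unfold trig_poly; simpl. auto_derive; auto. ring.
  - unfold trig_poly. simpl sum_f_R0.
    apply (is_derive_plus (fun y => trig_poly n N c a b y)); [apply IH|].
    auto_derive; auto. ring.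
Qed.

Lemma Hs_series_sine_poly sg n N c e : (1 <= n)%nat -> e 0%nat = 0 ->
  infinite_sum (Hs_term sg (trig_poly n N c (fun _ => 0) e))
    (sum_f_R0 (fun j => PI * Rpower (1 + INR (j*n)^2) sg * e j ^ 2) N).
Proof.
  intros Hn He0. pose proof PI_neq0 as HPI.
  apply is_series_Reals.
  eapply is_series_ext; [|apply is_series_Reals, spectrum_series].
  intros [|k]; unfold Hs_term; rewrite fcos_trig_poly; [|rewrite fsin_trig_poly].
  - rewrite (spectrum_map (fun u => u ^ 2 / (2 * PI))) by (auto; field; auto).
    apply spectrum_ext. intros j Hj. replace j with 0%nat by nia.
    rewrite He0. simpl. field. auto.
  - rewrite (spectrum_combine (fun u v => 2 * Rpower (1 + INR (S k) ^ 2) sg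
                                          * (u ^ 2 + v ^ 2) / (2 * PI)))
      by (auto; field; auto).
    apply spectrum_ext. intros j Hj. rewrite Hj. unfold cos_norm2. simpl Nat.eqb. cbv iota.
    pose proof (sin2_cos2 (INR j * c)) as Hsc. unfold Rsqr in Hsc.
    transitivity (PI * Rpower (1 + INR (S k) ^ 2) sg * e j ^ 2
                  * (sin (INR j * c) * sin (INR j * c) + cos (INR j * c) * cos (INR j * c))).
    + rewrite Hsc. ring.
    + field. auto.
Qed.

Lemma cos_multiple T :
  cos (INR 0 * T) = 1 /\ cos (INR 1 * T) = cos T /\
  cos (INR 2 * T) = 2 * cos T ^ 2 - 1 /\
  cos (INR 3 * T) = 4 * cos T ^ 3 - 3 * cos T /\
  cos (INR 4 * T) = 8 * cos T ^ 4 - 8 * cos T ^ 2 + 1.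
Proof.
  assert (H2 : forall y, cos (2 * y) = 2 * cos y ^ 2 - 1) by (intros y; rewrite cos_2a_cos; ring).
  pose proof (sin2_cos2 T) as Hsc. unfold Rsqr in Hsc.
  repeat split.
  - simpl. rewrite Rmult_0_l. apply cos_0.
  - simpl. rewrite Rmult_1_l. reflexivity.
  - replace (INR 2 * T) with (2 * T) by (simpl; ring). apply H2.
  - replace (INR 3 * T) with (2 * T + T) by (simpl; ring).
    rewrite cos_plus, H2, sin_2a.
    transitivity (4 * cos T ^ 3 - 3 * cos T
                  - 2 * cos T * (sin T * sin T + cos T * cos T - 1)); [ring | rewrite Hsc; ring].
  - replace (INR 4 * T) with (2 * (2 * T)) by (simpl; ring). rewrite !H2. ring.
Qed.

(* Cosine coefficients of P(A - B cos theta) for P(u) = -3u^4 + 2u^3 - 10u^2 - 2u,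
   after linearizing the powers of cos theta. *)
Definition poly_coef (A B : R) (j : nat) : R :=
  match j with
  | 0 => -3*A^4 + 2*A^3 - 10*A^2 - 2*A - 9*A^2*B^2 + 3*A*B^2 - 5*B^2 - 9*B^4/8
  | 1 => 12*A^3*B - 6*A^2*B + 20*A*B + 2*B + 9*A*B^3 - 3*B^3/2
  | 2 => -9*A^2*B^2 + 3*A*B^2 - 5*B^2 - 3*B^4/2
  | 3 => 3*A*B^3 - B^3/2
  | 4 => -3*B^4/8
  | _ => 0
  end.

(* Cosine coefficients of K sin^2 theta = K (1 - cos 2 theta) / 2. *)
Definition grad_coef (K : R) (j : nat) : R :=
  match j with
  | 0 => K / 2
  | 2 => - K / 2
  | _ => 0
  end.

Lemma trig_arg n y c j : INR (j*n) * y + INR j * c = INR j * (INR n * y + c).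
Proof. rewrite mult_INR. ring. Qed.

Lemma Rnl_harmonic A B n c y :
  Rnl (A - B * cos (INR n * y + c)) (B * INR n * sin (INR n * y + c))
  = trig_poly n 4 c (fun j => poly_coef A B j + grad_coef (7 * B^2 * INR n^2) j)
      (fun _ => 0) y.
Proof.
  unfold Rnl, trig_poly. cbn [sum_f_R0]. rewrite !trig_arg.
  set (T := INR n * y + c).
  destruct (cos_multiple T) as [-> [-> [-> [-> ->]]]].
  pose proof (sin2_cos2 T) as Hsc. unfold Rsqr in Hsc.
  replace ((B * INR n * sin T) ^ 2) with (B^2 * INR n ^ 2 * (1 - cos T * cos T))
    by (rewrite <- Hsc; ring).
  unfold poly_coef, grad_coef. field.
Qed.

Definition u_mean (omega : R) (n : nat) : R := (omega / INR n - 1) / 14.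
Definition u_amp (s : R) (n : nat) : R := Rpower (INR n) (- s) / 14.

Lemma u_app_harmonic s om n t x :
  u_app s om n t x = u_mean om n - u_amp s n * cos (INR n * x + om * t).
Proof. unfold u_app, u_mean, u_amp, Rdiv. ring. Qed.

Lemma u_app_dt s om n t x :
  derivable_pt_lim (fun tau => u_app s om n tau x) t
    (u_amp s n * om * sin (INR n * x + om * t)).
Proof.
  apply is_derive_Reals.
  eapply is_derive_ext; [intros tau; symmetry; apply u_app_harmonic|].
  auto_derive; auto. ring.
Qed.

Lemma u_app_dx s om n t x :
  derivable_pt_lim (fun y => u_app s om n t y) x
    (u_amp s n * INR n * sin (INR n * x + om * t)).
Proof.
  apply is_derive_Reals.
  eapply is_derive_ext; [intros y; symmetry; apply u_app_harmonic|].
  auto_derive; auto. ring.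
Qed.

(* The transport part u_t - u_x - 14 u u_x: the choice of the mean A makes the
   first-order terms cancel, leaving the quadratic term 7 n B^2 sin (2 theta). *)
Lemma transport_part om n B th : INR n <> 0 ->
  B * om * sin th - B * INR n * sin th
  - 14 * (u_mean om n - B * cos th) * (B * INR n * sin th)
  = 7 * INR n * B ^ 2 * sin (INR 2 * th).
Proof.
  intros Hn. replace (INR 2 * th) with (2 * th) by (simpl; ring).
  rewrite sin_2a. unfold u_mean. field. auto.
Qed.

(* Sine coefficients of the error: d_x Lambda^{-2} damps the frequency-(j n)
   coefficient of R(u) by j n / (1 + (j n)^2); the transport part adds
   7 n B^2 at j = 2. *)
Definition err_coef (A B : R) (n j : nat) : R :=
  INR (j*n) * (poly_coef A B j + grad_coef (7 * B^2 * INR n^2) j) / (1 + INR (j*n)^2)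
  + (if Nat.eqb j 2 then 7 * INR n * B^2 else 0).

Lemma err_coef_0 A B n : err_coef A B n 0 = 0.
Proof. unfold err_coef. simpl. rewrite Rmult_0_l, Rdiv_0_l. ring. Qed.

Lemma Err_sine_poly s om n t : (1 <= n)%nat ->
  Err s om n t = trig_poly n 4 (om * t) (fun _ => 0) (err_coef (u_mean om n) (u_amp s n) n).
Proof.
  intros Hn. assert (Hn' : INR n <> 0) by (apply not_0_INR; lia).
  set (A := u_mean om n). set (B := u_amp s n).
  set (a := fun j => poly_coef A B j + grad_coef (7 * B^2 * INR n^2) j).
  assert (HR : (fun y => Rnl (u_app s om n t y) (deriv (fun z => u_app s om n t z) y))
               = trig_poly n 4 (om * t) a (fun _ => 0)).
  { apply functional_extensionality. intros y.
    rewrite (deriv_of_lim _ _ _ (u_app_dx s om n t y)), u_app_harmonic.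
    apply Rnl_harmonic. }
  apply functional_extensionality. intros x.
  unfold Err. cbv zeta.
  rewrite (deriv_of_lim _ _ _ (u_app_dt s om n t x)),
    (deriv_of_lim _ _ _ (u_app_dx s om n t x)), HR, Lambda_m2_trig_poly by auto.
  rewrite (deriv_of_lim _ _ _ (derivable_pt_lim_trig_poly _ _ _ _ _ x)).
  rewrite u_app_harmonic, transport_part by auto.
  unfold trig_poly, err_coef. cbn [sum_f_R0 Nat.eqb]. rewrite !trig_arg.
  assert (Hp : forall j, 1 + INR (j*n) ^ 2 <> 0) by (intros j; pose proof (pos_INR (j*n)); nra).
  fold B. unfold a. field. repeat split; auto.
Qed.

Lemma u_mean_range om n : (om = 1 \/ om = -1) -> (1 <= n)%nat -> -1/7 <= u_mean om n <= 0.
Proof.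
  intros Hom Hn. assert (HN : 1 <= INR n) by (apply (le_INR 1); lia).
  assert (-1 <= om / INR n <= 1).
  { destruct Hom as [-> | ->]; split; apply (Rmult_le_reg_r (INR n)); try lra;
      field_simplify; lra. }
  unfold u_mean. lra.
Qed.

Lemma u_amp_range s n : 0 < s -> (1 <= n)%nat -> 0 < u_amp s n <= 1/14.
Proof.
  intros Hs Hn. assert (HN : 1 <= INR n) by (apply (le_INR 1); lia).
  assert (Rpower (INR n) (- s) <= 1).
  { rewrite <- (Rpower_O (INR n)) by lra. apply Rle_Rpower; lra. }
  pose proof (exp_pos (- s * ln (INR n))). unfold u_amp, Rpower in *. lra.
Qed.

Lemma poly_coef_bound A B j : -1/7 <= A <= 0 -> 0 < B <= 1/14 -> (1 <= j)%nat ->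
  Rabs (poly_coef A B j) <= 14 * B.
Proof.
  intros HA HB Hj.
  assert (Hscale : forall g, -14 <= g <= 14 -> Rabs (B * g) <= 14 * B).
  { intros g Hg. rewrite Rabs_mult, (Rabs_pos_eq B), (Rmult_comm 14) by lra.
    apply Rmult_le_compat_l; [lra|]. apply Rabs_le. lra. }
  assert (HA2 : 0 <= A ^ 2 <= 1/49) by (split; nra).
  assert (HA3 : -1/49 <= A ^ 3 <= 0) by (split; nra).
  assert (HB2 : 0 <= B ^ 2 <= 1/196) by (split; nra).
  assert (HAB2 : -1/49 <= A * B ^ 2 <= 0) by (split; nra).
  assert (HA2B : 0 <= A ^ 2 * B <= 1) by (split; nra).
  assert (HAB : -1 <= A * B <= 0) by (split; nra).
  assert (HB3 : 0 <= B ^ 3 <= 1) by (split; nra).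
  destruct j as [|[|[|[|[|j]]]]]; try lia; cbn [poly_coef].
  - replace (12*A^3*B - 6*A^2*B + 20*A*B + 2*B + 9*A*B^3 - 3*B^3/2)
      with (B * (12*A^3 - 6*A^2 + 20*A + 2 + 9*(A*B^2) - 3*B^2/2)) by field.
    apply Hscale. lra.
  - replace (-9*A^2*B^2 + 3*A*B^2 - 5*B^2 - 3*B^4/2)
      with (B * (-9*(A^2*B) + 3*(A*B) - 5*B - 3*B^3/2)) by field.
    apply Hscale. lra.
  - replace (3*A*B^3 - B^3/2) with (B * (3*(A*B^2) - B^2/2)) by field.
    apply Hscale. lra.
  - replace (-3*B^4/8) with (B * (-3*B^3/8)) by field.
    apply Hscale. lra.
  - rewrite Rabs_R0. lra.
Qed.

(* d_x Lambda^{-2} gains one power of the frequency: m / (1 + m^2) <= 1 / N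
   for frequencies m >= N >= 1. *)
Lemma smoothing_gain m N q : 1 <= N <= m -> Rabs (m * q / (1 + m ^ 2)) <= Rabs q / N.
Proof.
  intros HN.
  assert (Hw : 0 <= m / (1 + m ^ 2) <= / N).
  { split; [apply Rdiv_le_0_compat; nra|].
    apply (Rmult_le_reg_r (N * (1 + m ^ 2))); [nra|].
    field_simplify; nra. }
  replace (m * q / (1 + m ^ 2)) with (q * (m / (1 + m ^ 2))) by (field; nra).
  rewrite Rabs_mult, (Rabs_pos_eq (m / _)) by lra.
  apply Rmult_le_compat_l; [apply Rabs_pos | lra].
Qed.

(* The transport correction at j = 2 nearly cancels the 7 u_x^2 contribution:
   what remains is 7 n B^2 (1 + 3 n^2) / (1 + 4 n^2), between 0 and 7 n B^2. *)
Lemma grad_transport_balance N B : 1 <= N ->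
  0 <= 2 * N * grad_coef (7 * B ^ 2 * N ^ 2) 2 / (1 + (2 * N) ^ 2) + 7 * N * B ^ 2
    <= 7 * N * B ^ 2.
Proof.
  intros HN. cbn [grad_coef].
  replace (2 * N * (- (7 * B ^ 2 * N ^ 2) / 2) / (1 + (2 * N) ^ 2) + 7 * N * B ^ 2)
    with (7 * N * B ^ 2 * ((1 + 3 * N ^ 2) / (1 + 4 * N ^ 2))) by (field; nra).
  assert (H7 : 0 <= 7 * N * B ^ 2) by (pose proof (pow2_ge_0 B); nra).
  assert (Hr : 0 <= (1 + 3 * N ^ 2) / (1 + 4 * N ^ 2) <= 1).
  { split; [apply Rdiv_le_0_compat; nra|].
    apply (Rmult_le_reg_r (1 + 4 * N ^ 2)); [nra|]. field_simplify; nra. }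
  split; [apply Rmult_le_pos; lra|].
  rewrite <- (Rmult_1_r (7 * N * B ^ 2)) at 2. apply Rmult_le_compat_l; lra.
Qed.

Lemma err_coef_bound A B n j : -1/7 <= A <= 0 -> 0 < B <= 1/14 -> (1 <= n)%nat ->
  Rabs (err_coef A B n j) <= 14 * B / INR n + INR n * (14 * B) ^ 2.
Proof.
  intros HA HB Hn. assert (HN : 1 <= INR n) by (apply (le_INR 1); lia).
  assert (Hpos : 0 <= 14 * B / INR n) by (apply Rdiv_le_0_compat; lra).
  assert (HB2 : 0 <= INR n * B ^ 2) by (pose proof (pow2_ge_0 B); nra).
  destruct (Nat.eq_dec j 0) as [->|Hj0].
  { rewrite err_coef_0, Rabs_R0. nra. }
  assert (Hfreq : 1 <= INR n <= INR (j * n)) by (split; [lra|apply le_INR; nia]).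
  pose proof (poly_coef_bound A B j HA HB ltac:(lia)) as Hq.
  unfold err_coef.
  destruct (Nat.eq_dec j 2) as [->|Hj2].
  - rewrite Nat.eqb_refl, mult_INR.
    replace (INR 2 * INR n * (poly_coef A B 2 + grad_coef (7 * B ^ 2 * INR n ^ 2) 2)
               / (1 + (INR 2 * INR n) ^ 2) + 7 * INR n * B ^ 2)
      with (INR (2 * n) * poly_coef A B 2 / (1 + INR (2 * n) ^ 2)
            + (2 * INR n * grad_coef (7 * B ^ 2 * INR n ^ 2) 2 / (1 + (2 * INR n) ^ 2)
               + 7 * INR n * B ^ 2))
      by (rewrite mult_INR; simpl INR; field; pose proof (pos_INR n); nra).
    pose proof (smoothing_gain _ _ (poly_coef A B 2) Hfreq).
    pose proof (grad_transport_balance (INR n) B HN).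
    eapply Rle_trans; [apply Rabs_triang|]. rewrite (Rabs_pos_eq (_ + _)) by lra.
    assert (Rabs (poly_coef A B 2) / INR n <= 14 * B / INR n)
      by (apply Rmult_le_compat_r; [left; apply Rinv_0_lt_compat; lra | lra]).
    nra.
  - replace (grad_coef (7 * B ^ 2 * INR n ^ 2) j) with 0
      by (destruct j as [|[|[|j]]]; (lia || reflexivity)).
    replace (Nat.eqb j 2) with false by (symmetry; apply Nat.eqb_neq; auto).
    rewrite Rplus_0_r, Rplus_0_r.
    eapply Rle_trans; [apply (smoothing_gain _ _ _ Hfreq)|].
    assert (Rabs (poly_coef A B j) / INR n <= 14 * B / INR n)
      by (apply Rmult_le_compat_r; [left; apply Rinv_0_lt_compat; lra | lra]).
    nra.
Qed.

Lemma sobolev_weight_bound N m sg : 1 <= N -> 0 <= m <= 4 * N -> 0 <= sg <= 1 ->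
  Rpower (1 + m ^ 2) sg <= 17 * Rpower N (2 * sg).
Proof.
  intros HN Hm Hs.
  apply Rle_trans with (Rpower (17 * N ^ 2) sg).
  { apply Rle_Rpower_l; [lra|]. split; nra. }
  rewrite <- Rpower_mult_distr by nra.
  replace (N ^ 2) with (Rpower N (INR 2)) by (apply Rpower_pow; lra).
  rewrite Rpower_mult. replace (INR 2 * sg) with (2 * sg) by (simpl; ring).
  apply Rmult_le_compat_r; [left; apply exp_pos|].
  rewrite <- (Rpower_1 17) at 2 by lra. apply Rle_Rpower; lra.
Qed.

(* The H^sigma energy of the error: each of the five terms is at most
   4 * 17 n^{2 sigma} (eps/n + n eps^2)^2, where eps = n^{-s} = 14 B. *)
Lemma error_energy_bound s om n sg : 0 < s -> (om = 1 \/ om = -1) -> (1 <= n)%nat ->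
  0 <= sg <= 1 ->
  sum_f_R0 (fun j => PI * Rpower (1 + INR (j*n) ^ 2) sg
                     * err_coef (u_mean om n) (u_amp s n) n j ^ 2) 4
  <= 340 * (Rpower (INR n) sg
            * (Rpower (INR n) (- s) / INR n + INR n * Rpower (INR n) (- s) ^ 2)) ^ 2.
Proof.
  intros Hs Hom Hn Hsg. assert (HN : 1 <= INR n) by (apply (le_INR 1); lia).
  assert (HN0 : INR n <> 0) by lra.
  set (N := INR n) in *. set (eps := Rpower N (- s)).
  set (W := Rpower N (2 * sg)).
  set (D := eps / N + N * eps ^ 2).
  assert (HW : 0 <= W) by (left; apply exp_pos).
  assert (Hterm : forall j, (j <= 4)%nat ->
    PI * Rpower (1 + INR (j*n) ^ 2) sg * err_coef (u_mean om n) (u_amp s n) n j ^ 2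
    <= 68 * W * D ^ 2).
  { intros j Hj.
    assert (He : Rabs (err_coef (u_mean om n) (u_amp s n) n j) <= D).
    { replace D with (14 * u_amp s n / INR n + INR n * (14 * u_amp s n) ^ 2)
        by (unfold D, eps, N, u_amp; field; auto).
      apply err_coef_bound; auto using u_mean_range, u_amp_range. }
    assert (He2 : err_coef (u_mean om n) (u_amp s n) n j ^ 2 <= D ^ 2).
    { rewrite <- (pow2_abs (err_coef _ _ _ _)). apply pow_incr. split; [apply Rabs_pos|auto]. }
    assert (Hm : 0 <= INR (j*n) <= 4 * N).
    { split; [apply pos_INR|]. unfold N. replace 4 with (INR 4) by (simpl; ring).
      rewrite <- mult_INR. apply le_INR. nia. }
    pose proof (sobolev_weight_bound N (INR (j*n)) sg HN Hm Hsg) as Hr. fold W in Hr.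
    pose proof PI_4. pose proof PI_RGT_0.
    replace (68 * W * D ^ 2) with ((4 * (17 * W)) * D ^ 2) by ring.
    apply Rmult_le_compat; try apply pow2_ge_0; auto.
    - apply Rmult_le_pos; [lra|]. left; apply exp_pos.
    - apply Rmult_le_compat; lra || (left; apply exp_pos). }
  replace (340 * (Rpower N sg * D) ^ 2) with (5 * (68 * W * D ^ 2)).
  - cbn [sum_f_R0].
    pose proof (Hterm 0%nat ltac:(lia)). pose proof (Hterm 1%nat ltac:(lia)).
    pose proof (Hterm 2%nat ltac:(lia)). pose proof (Hterm 3%nat ltac:(lia)).
    pose proof (Hterm 4%nat ltac:(lia)). lra.
  - unfold W. replace (2 * sg) with (sg + sg) by ring. rewrite Rpower_plus. ring.
Qed.

Lemma rate_identities N s sg : 1 <= N ->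
  Rpower N sg * (Rpower N (- s) / N) = Rpower N (- s - 1 + sg) /\
  Rpower N sg * (N * Rpower N (- s) ^ 2) = Rpower N (- 2 * s + 1 + sg).
Proof.
  intros HN. split.
  - replace (- s - 1 + sg) with (sg + (- s + - (1))) by ring.
    rewrite !Rpower_plus, (Rpower_Ropp N 1), Rpower_1 by lra. field. lra.
  - replace (- 2 * s + 1 + sg) with (sg + (1 + (- s + - s))) by ring.
    rewrite !Rpower_plus, Rpower_1 by lra. ring.
Qed.

Lemma sqrt_energy_le l a b M : 0 <= a <= M -> 0 <= b <= M -> l <= 340 * (a + b) ^ 2 ->
  sqrt l <= 37 * M.
Proof.
  intros Ha Hb Hl. rewrite <- (sqrt_pow2 (37 * M)) by lra.
  apply sqrt_le_1_alt. nra.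
Qed.

Theorem lemma3p1 (s : R) (hs : 3 / 2 < s) :
  exists C : R, 0 < C /\
    forall (sigma omega : R) (n : nat) (t : R),
      1 / 2 < sigma -> sigma <= 1 ->
      (omega = 1 \/ omega = -1) ->
      (1 <= n)%nat ->
      exists l : R,
        infinite_sum (Hs_term sigma (Err s omega n t)) l /\
        sqrt l <=
          (if Rlt_dec s 2
           then C * Rpower (INR n) (- 2 * s + 1 + sigma)
           else C * Rpower (INR n) (- s - 1 + sigma)).
Proof.
  exists 37. split; [lra|].
  intros sg om n t Hsg1 Hsg2 Hom Hn.
  assert (HN : 1 <= INR n) by (apply (le_INR 1); lia).
  rewrite Err_sine_poly by auto.
  eexists. split.
  { apply Hs_series_sine_poly; auto using err_coef_0. }
  pose proof (error_energy_bound s om n sg ltac:(lra) Hom Hn ltac:(lra)) as Hl.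
  destruct (rate_identities (INR n) s sg HN) as [Ha Hb].
  rewrite Rmult_plus_distr_l, Ha, Hb in Hl.
  set (a := Rpower (INR n) (- s - 1 + sg)) in *.
  set (b := Rpower (INR n) (- 2 * s + 1 + sg)) in *.
  assert (Ha0 : 0 <= a) by (left; apply exp_pos).
  assert (Hb0 : 0 <= b) by (left; apply exp_pos).
  destruct (Rlt_dec s 2) as [Hlt|Hge].
  - assert (a <= b) by (apply Rle_Rpower; lra).
    apply (sqrt_energy_le _ a b); lra.
  - assert (b <= a) by (apply Rle_Rpower; lra).
    apply (sqrt_energy_le _ a b); lra.
Qed.
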